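(* Let $\langle D,E,e,\varepsilon\rangle$ be a restricted Priestley duality between a variety $\mathcal A$ and a category $\mathcal X$ (with underlying-Priestley-space functor ${}^\flat\colon\mathcal X\to\mathcal P$). Let $\mathcal B$ be a finite set of finite algebras from $\mathcal A$ and let $\mathcal Y=\{D(\mathbf A)\mid \mathbf A\in\mathcal B\}$. Then the following are equivalent: (1) the algebras in $\mathcal B$ are quasi-primal and share a common ternary discriminator term; (2) for all $\mathbb X_1,\mathbb X_2\in\mathcal Y$, for each $\mathbb Y\in\mathcal X$ and every pair $\phi_1\colon\mathbb X_1\to\mathbb Y$, $\phi_2\colon\mathbb X_2\to\mathbb Y$ of jointly $\mathcal P$-surjective morphisms of $\mathcal X$, either $\mathbb Y^\flat=\phi_1^\flat(\mathbb X_1^\flat)\,\dot\cup\,\phi_2^\flat(\mathbb X_2^\flat)$, or both $\phi_1$ and $\phi_2$ are $\mathcal P$-surjective.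
   Context: $\mathcal D$ denotes the category of bounded distributive lattices (with bound-preserving lattice homomorphisms) and $\mathcal P$ the category of Priestley spaces (with continuous order-preserving maps). $\mathbf 2$ is the two-element bounded lattice and $\mathbbm 2$ the discretely topologised two-element chain. Priestley duality: $H\colon\mathcal D\to\mathcal P$, $H(\mathbf L)=\mathcal D(\mathbf L,\mathbf 2)$ with order and topology inherited from $\mathbbm 2^L$; $K\colon\mathcal P\to\mathcal D$, $K(\mathbb X)=\mathcal P(\mathbb X,\mathbbm 2)$ with operations inherited pointwise; on morphisms both act by precomposition; the unit $e_{\mathbf L}\colon\mathbf L\to KH(\mathbf L)$ and counit $\varepsilon_{\mathbb X}\colon\mathbb X\to HK(\mathbb X)$ are evaluation maps. A restricted Priestley duality: $\mathcal A$ is a variety of algebras with a term reduct in $\mathcal D$, ${}^\flat\colon\mathcal A\to\mathcal D$ the forgetful functor; $\mathcal X$ is a category with a functor ${}^\flat\colon\mathcal X\to\mathcal P$; $D\colon\mathcal A\to\mathcal X$ and $E\colon\mathcal X\to\mathcal A$ form a dual equivalence with unit $e\colon \mathrm{id}_{\mathcal A}\to ED$ and counit $\varepsilon\colon\mathrm{id}_{\mathcal X}\to DE$, such that ${}^\flat\circ D=H\circ{}^\flat$ and ${}^\flat\circ E=K\circ{}^\flat$ as functors, and $e_{\mathbf A}^\flat=e_{\mathbf A^\flat}$, $\varepsilon_{\mathbb X}^\flat=\varepsilon_{\mathbb X^\flat}$ for all $\mathbf A\in\mathcal A$, $\mathbb X\in\mathcal X$. A morphism $\phi$ of $\mathcal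 X$ is $\mathcal P$-surjective if $\phi^\flat$ is surjective; two morphisms $\phi_1\colon\mathbb X_1\to\mathbb Y$, $\phi_2\colon\mathbb X_2\to\mathbb Y$ are jointly $\mathcal P$-surjective if $\phi_1^\flat(\mathbb X_1^\flat)\cup\phi_2^\flat(\mathbb X_2^\flat)$ is the whole of $\mathbb Y^\flat$. The notation $\mathbb Y^\flat=\phi_1^\flat(\mathbb X_1^\flat)\,\dot\cup\,\phi_2^\flat(\mathbb X_2^\flat)$ means $\mathbb Y^\flat$ is the disjoint union of these two images as ordered spaces: they are disjoint, cover $\mathbb Y^\flat$, and no element of one is comparable with an element of the other. The ternary discriminator on a set $A$ is $\tau(x,y,z)=x$ if $x\ne y$ and $\tau(x,y,z)=z$ if $x=y$. A finite algebra is quasi-primal if the ternary discriminator is a term function of it; a family of algebras shares a common ternary discriminator term if there is a single ternary term $t$ with $t^{\mathbf A}$ the ternary discriminator on $A$ for each member $\mathbf A$. *)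

From Stdlib Require Import List FunctionalExtensionality.
From mathcomp Require Import all_boot.

Record category := Category {
  Ob : Type;
  Hom : Ob -> Ob -> Type;
  idm : forall a : Ob, Hom a a;
  comp : forall a b c : Ob, Hom b c -> Hom a b -> Hom a c }.
Arguments Hom {_} _ _.
Arguments idm {_} a.
Arguments comp {_ _ _ _} _ _.

Definition is_category (C : category) : Prop :=
  (forall (a b : Ob C) (f : Hom a b), comp (idm b) f = f) /\
  (forall (a b : Ob C) (f : Hom a b), comp f (idm a) = f) /\
  (forall (a b c d : Ob C) (f : Hom a b) (g : Hom b c) (h : Hom c d),
      comp h (comp g f) = comp (comp h g) f).

Record signature := Signature { op : Type; arity : op -> nat }.

Record algebra (S : signature) := Algebra {
  car : Type;
  opr : forall o : op S, ('I_(arity S o) -> car) -> car }.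
Arguments car {S} a.
Arguments opr {S} a o _.

Inductive term (S : signature) (n : nat) : Type :=
| Var : 'I_n -> term S n
| App : forall o : op S, ('I_(arity S o) -> term S n) -> term S n.
Arguments Var {S n} _.
Arguments App {S n} o _.

Fixpoint eval {S : signature} (A : algebra S) {n : nat} (env : 'I_n -> car A)
  (t : term S n) : car A :=
  match t with
  | Var i => env i
  | App o args => opr A o (fun j => eval A env (args j))
  end.

Definition env0 (T : Type) : 'I_0 -> T.
Proof. by case. Defined.
Definition env2 {T : Type} (x y : T) : 'I_2 -> T :=
  fun i => if nat_of_ord i == 0 then x else y.
Definition env3 {T : Type} (x y z : T) : 'I_3 -> T :=
  fun i => if nat_of_ord i == 0 then x else if nat_of_ord i == 1 then y else z.

Definition satisfies {S} (A : algebra S) {n} (l r : term S n) : Prop :=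
  forall env : 'I_n -> car A, eval A env l = eval A env r.

(* a variety = an equational class (Birkhoff) *)
Definition is_variety {S} (V : algebra S -> Prop) : Prop :=
  exists Id : forall n : nat, term S n -> term S n -> Prop,
    forall A : algebra S, V A <-> (forall n l r, Id n l r -> satisfies A l r).

Definition is_hom {S} (A B : algebra S) (f : car A -> car B) : Prop :=
  forall o args, f (opr A o args) = opr B o (fun j => f (args j)).

Definition finite_alg {S} (A : algebra S) : Prop :=
  exists s : list (car A), forall x, In x s.

Definition is_discriminator {S} (A : algebra S) (t : term S 3) : Prop :=
  forall x y z : car A,
    (x = y -> eval A (env3 x y z) t = z) /\ (x <> y -> eval A (env3 x y z) t = x).

Definition quasi_primal {S} (A : algebra S) : Prop :=
  finite_alg A /\ exists t : term S 3, is_discriminator A t.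

Record rawDL := RawDL {
  dcar : Type;
  dmeet : dcar -> dcar -> dcar;
  djoin : dcar -> dcar -> dcar;
  dbot : dcar;
  dtop : dcar }.
Arguments dmeet r _ _.
Arguments djoin r _ _.
Arguments dbot r.
Arguments dtop r.

Definition is_bdl (L : rawDL) : Prop :=
  (forall x y z, dmeet L x (dmeet L y z) = dmeet L (dmeet L x y) z) /\
  (forall x y z, djoin L x (djoin L y z) = djoin L (djoin L x y) z) /\
  (forall x y, dmeet L x y = dmeet L y x) /\
  (forall x y, djoin L x y = djoin L y x) /\
  (forall x y, dmeet L x (djoin L x y) = x) /\
  (forall x y, djoin L x (dmeet L x y) = x) /\
  (forall x y z, dmeet L x (djoin L y z) = djoin L (dmeet L x y) (dmeet L x z)) /\
  (forall x, dmeet L x (dtop L) = x) /\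
  (forall x, djoin L x (dbot L) = x).

Definition is_dlhom (L M : rawDL) (f : dcar L -> dcar M) : Prop :=
  (forall x y, f (dmeet L x y) = dmeet M (f x) (f y)) /\
  (forall x y, f (djoin L x y) = djoin M (f x) (f y)) /\
  f (dbot L) = dbot M /\ f (dtop L) = dtop M.

Definition dl2 : rawDL := @RawDL bool andb orb false true.

Record lattice_terms (S : signature) := LatticeTerms {
  tmeet : term S 2; tjoin : term S 2; tbot : term S 0; ttop : term S 0 }.
Arguments tmeet {S} l.
Arguments tjoin {S} l.
Arguments tbot {S} l.
Arguments ttop {S} l.

(* the forgetful functor ^flat : A -> D on objects *)
Definition reduct {S} (lt : lattice_terms S) (A : algebra S) : rawDL :=
  @RawDL (car A)
    (fun x y => eval A (env2 x y) (tmeet lt))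
    (fun x y => eval A (env2 x y) (tjoin lt))
    (eval A (env0 (car A)) (tbot lt))
    (eval A (env0 (car A)) (ttop lt)).

Lemma eval_hom {S} (A B : algebra S) (f : car A -> car B) n (env : 'I_n -> car A)
  (t : term S n) : is_hom A B f -> f (eval A env t) = eval B (fun i => f (env i)) t.
Proof.
move=> hf; elim: t => [i|o args IH] //=.
rewrite hf; congr (opr B o _); apply: functional_extensionality => j; exact: IH.
Qed.
Arguments eval_hom {S A B f n env t} _.

Lemma hom_reduct {S} (lt : lattice_terms S) (A B : algebra S) (f : car A -> car B) :
  is_hom A B f -> is_dlhom (reduct lt A) (reduct lt B) f.
Proof.
move=> hf.
have e2 : forall x y, (fun i => f (env2 x y i)) = env2 (f x) (f y).
  by move=> x y; apply: functional_extensionality => i; rewrite /env2; case: ifP.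
have e0 : (fun i => f (env0 (car A) i)) = env0 (car B).
  by apply: functional_extensionality; case.
rewrite /is_dlhom /=; split; [|split; [|split]].
- by move=> x y; rewrite (eval_hom hf) e2.
- by move=> x y; rewrite (eval_hom hf) e2.
- by rewrite (eval_hom hf) e0.
- by rewrite (eval_hom hf) e0.
Qed.
Arguments hom_reduct {S} lt {A B f} _.

Record tspace := TSpace {
  pt : Type;
  ple : pt -> pt -> Prop;
  popen : (pt -> Prop) -> Prop;
  popen_setT : popen (fun _ => True);
  popen_I : forall U W, popen U -> popen W -> popen (fun x => U x /\ W x);
  popen_local : forall U,
    (forall x, U x -> exists W, popen W /\ W x /\ (forall y, W y -> U y)) ->
    popen U }.
Arguments ple _ _ _.
Arguments popen _ _.

Definition is_poset (X : tspace) : Prop :=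
  (forall x, ple X x x) /\
  (forall x y, ple X x y -> ple X y x -> x = y) /\
  (forall x y z, ple X x y -> ple X y z -> ple X x z).

Definition compact (X : tspace) : Prop :=
  forall F : (pt X -> Prop) -> Prop,
    (forall U, F U -> popen X U) -> (forall x, exists U, F U /\ U x) ->
    exists s : list (pt X -> Prop),
      (forall U, In U s -> F U) /\ (forall x, exists U, In U s /\ U x).

Definition clopen (X : tspace) (U : pt X -> Prop) : Prop :=
  popen X U /\ popen X (fun x => ~ U x).

Definition upset (X : tspace) (U : pt X -> Prop) : Prop :=
  forall x y, U x -> ple X x y -> U y.

Definition is_priestley (X : tspace) : Prop :=
  is_poset X /\ compact X /\
  (forall x y, ~ ple X x y ->
     exists U, clopen X U /\ upset X U /\ U x /\ ~ U y).

Definition continuous (X Y : tspace) (f : pt X -> pt Y) : Prop :=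
  forall V, popen Y V -> popen X (fun x => V (f x)).
Definition monotone (X Y : tspace) (f : pt X -> pt Y) : Prop :=
  forall x y, ple X x y -> ple Y (f x) (f y).
Definition pmorph (X Y : tspace) (f : pt X -> pt Y) : Prop :=
  continuous X Y f /\ monotone X Y f.

Definition two : tspace :=
  @TSpace bool (fun a b => implb a b = true) (fun _ => True) I
    (fun _ _ _ _ => I) (fun _ _ => I).

Definition Kcar (X : tspace) : Type := {f : pt X -> bool | pmorph X two f}.

Lemma pmorph_bin (X : tspace) (op2 : bool -> bool -> bool)
  (mop : forall a b c d, implb a b -> implb c d -> implb (op2 a c) (op2 b d))
  (f g : pt X -> bool) :
  pmorph X two f -> pmorph X two g -> pmorph X two (fun x => op2 (f x) (g x)).
Proof.
move=> [cf mf] [cg mg]; split.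
- move=> V _; apply: popen_local => x Vx.
  exists (fun y => f y = f x /\ g y = g x); split; last split => //.
  + apply: popen_I; [exact: (cf (fun b => b = f x) I) | exact: (cg (fun b => b = g x) I)].
  + by move=> y [-> ->].
- by move=> x y le; apply: mop; [exact: mf | exact: mg].
Qed.
Arguments pmorph_bin {X op2} mop {f g} _ _.

Lemma pmorph_const (X : tspace) (b : bool) : pmorph X two (fun _ => b).
Proof.
split.
- move=> V _; apply: popen_local => x Vb.
  by exists (fun _ => True); split; [exact: popen_setT | split].
- by move=> x y _; case: b.
Qed.

Lemma mop_and a b c d : implb a b -> implb c d -> implb (a && c) (b && d).
Proof. by case: a; case: b; case: c; case: d. Qed.
Lemma mop_or a b c d : implb a b -> implb c d -> implb (a || c) (b || d).
Proof. by case: a; case: b; case: c; case: d. Qed.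

Definition rawK (X : tspace) : rawDL :=
  @RawDL (Kcar X)
    (fun f g => exist _ (fun x => sval f x && sval g x)
                  (pmorph_bin mop_and (svalP f) (svalP g)))
    (fun f g => exist _ (fun x => sval f x || sval g x)
                  (pmorph_bin mop_or (svalP f) (svalP g)))
    (exist _ (fun _ => false) (pmorph_const X false))
    (exist _ (fun _ => true) (pmorph_const X true)).

Lemma pmorph_comp (X Y Z : tspace) (f : pt X -> pt Y) (g : pt Y -> pt Z) :
  pmorph X Y f -> pmorph Y Z g -> pmorph X Z (fun x => g (f x)).
Proof.
move=> [cf mf] [cg mg]; split.
- by move=> V oV; exact: (cf _ (cg V oV)).
- by move=> x y le; apply: mg; apply: mf.
Qed.
Arguments pmorph_comp {X Y Z f g} _ _.

Definition Kmap (X Y : tspace) (f : pt X -> pt Y) (hf : pmorph X Y f) :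
  Kcar Y -> Kcar X :=
  fun g => exist _ (fun x => sval g (f x)) (pmorph_comp hf (svalP g)).
Arguments Kmap {X Y f} hf _.

Definition Hcar (L : rawDL) : Type := {x : dcar L -> bool | is_dlhom L dl2 x}.

(* basic open sets of the topology inherited from the product 2^L *)
Definition Hbasic (L : rawDL) (s : list (dcar L * bool)) (x : Hcar L) : Prop :=
  Forall (fun p => sval x (fst p) = snd p) s.
Arguments Hbasic {L} s x.

Definition Hopen (L : rawDL) (U : Hcar L -> Prop) : Prop :=
  forall x, U x -> exists s, Hbasic s x /\ (forall y, Hbasic s y -> U y).

Lemma Hopen_setT L : Hopen L (fun _ => True).
Proof. by move=> x _; exists nil; split => //; constructor. Qed.

Lemma Hopen_I L U W : Hopen L U -> Hopen L W -> Hopen L (fun x => U x /\ W x).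
Proof.
move=> oU oW x [Ux Wx].
have [s1 [b1 h1]] := oU x Ux; have [s2 [b2 h2]] := oW x Wx.
exists (List.app s1 s2); split.
- by apply/Forall_app.
- by move=> y /Forall_app [y1 y2]; split; [exact: h1 | exact: h2].
Qed.

Lemma Hopen_local L U :
  (forall x, U x -> exists W, Hopen L W /\ W x /\ (forall y, W y -> U y)) ->
  Hopen L U.
Proof.
move=> h x Ux; have [W [oW [Wx WU]]] := h x Ux.
have [s [bs hs]] := oW x Wx; exists s; split => // y /hs; exact: WU.
Qed.

Definition rawH (L : rawDL) : tspace :=
  @TSpace (Hcar L) (fun x y => forall a, implb (sval x a) (sval y a) = true)
    (Hopen L) (Hopen_setT L) (@Hopen_I L) (@Hopen_local L).

Lemma dlhom_comp (L M N : rawDL) (f : dcar L -> dcar M) (g : dcar M -> dcar N) :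
  is_dlhom L M f -> is_dlhom M N g -> is_dlhom L N (fun a => g (f a)).
Proof.
move=> [f1 [f2 [f3 f4]]] [g1 [g2 [g3 g4]]]; split; [|split; [|split]].
- by move=> x y; rewrite f1 g1.
- by move=> x y; rewrite f2 g2.
- by rewrite f3 g3.
- by rewrite f4 g4.
Qed.
Arguments dlhom_comp {L M N f g} _ _.

Definition Hmap (L M : rawDL) (f : dcar L -> dcar M) (hf : is_dlhom L M f) :
  Hcar M -> Hcar L :=
  fun x => exist _ (fun a => sval x (f a)) (dlhom_comp hf (svalP x)).
Arguments Hmap {L M f} hf _.

Lemma ev_pmorph (L : rawDL) (a : dcar L) :
  pmorph (rawH L) two (fun x : Hcar L => sval x a).
Proof.
split.
- move=> V _ x Vx; exists ((a, sval x a) :: nil); split.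
  + by constructor.
  + by move=> y hy; inversion hy; subst; simpl in *; rewrite H1.
- by move=> x y le; exact: le.
Qed.
Arguments ev_pmorph {L} a.

Definition evK (L : rawDL) : dcar L -> Kcar (rawH L) :=
  fun a => exist _ (fun x : Hcar L => sval x a) (ev_pmorph a).

Lemma ev_dlhom (X : tspace) (x : pt X) :
  is_dlhom (rawK X) dl2 (fun g : Kcar X => sval g x).
Proof. by split; [|split; [|split]]. Qed.
Arguments ev_dlhom {X} x.

Definition evH (X : tspace) : pt X -> Hcar (rawK X) :=
  fun x => exist _ (fun g : Kcar X => sval g x) (ev_dlhom x).

Definition objA {S} (V : algebra S -> Prop) : Type := {A : algebra S | V A}.

Definition homA {S} {V : algebra S -> Prop} (A B : objA V) : Type :=
  {f : car (sval A) -> car (sval B) | is_hom (sval A) (sval B) f}.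

Lemma is_hom_id {S} (A : algebra S) : is_hom A A (fun x => x).
Proof. by []. Qed.

Lemma is_hom_comp {S} (A B C : algebra S) f g :
  is_hom A B f -> is_hom B C g -> is_hom A C (fun x => g (f x)).
Proof. by move=> hf hg o args; rewrite hf hg. Qed.
Arguments is_hom_comp {S A B C f g} _ _.

Definition idA {S} {V : algebra S -> Prop} (A : objA V) : homA A A :=
  exist _ (fun x => x) (is_hom_id (sval A)).

Definition compA {S} {V : algebra S -> Prop} {A B C : objA V}
  (g : homA B C) (f : homA A B) : homA A C :=
  exist _ (fun x => sval g (sval f x)) (is_hom_comp (svalP f) (svalP g)).

Record pfunctor (C : category) := PFunctor {
  fobj : Ob C -> tspace;
  fhom : forall a b : Ob C, Hom a b -> pt (fobj a) -> pt (fobj b);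
  fhom_pm : forall (a b : Ob C) (f : Hom a b), pmorph (fobj a) (fobj b) (fhom a b f) }.
Arguments fobj {C} p _.
Arguments fhom {C} p {a b} _ _.
Arguments fhom_pm {C} p {a b} f.

Definition is_pfunctor (C : category) (F : pfunctor C) : Prop :=
  (forall a, is_priestley (fobj F a)) /\
  (forall a x, fhom F (idm a) x = x) /\
  (forall (a b c : Ob C) (g : Hom b c) (f : Hom a b) x,
      fhom F (comp g f) x = fhom F g (fhom F f x)).
Arguments is_pfunctor {C} F.

Record rpd_data {S} (V : algebra S -> Prop) := RPD {
  Xcat : category;
  flat : pfunctor Xcat;
  Dobj : objA V -> Ob Xcat;
  Dhom : forall A B : objA V, homA A B -> @Hom Xcat (Dobj B) (Dobj A);
  Eobj : Ob Xcat -> objA V;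
  Ehom : forall x y : Ob Xcat, Hom x y -> homA (Eobj y) (Eobj x);
  unit : forall A : objA V, homA A (Eobj (Dobj A));
  counit : forall x : Ob Xcat, Hom x (Dobj (Eobj x)) }.
Arguments Xcat {S V} r.
Arguments flat {S V} r.
Arguments Dobj {S V} r _.
Arguments Dhom {S V} r {A B} _.
Arguments Eobj {S V} r _.
Arguments Ehom {S V} r {x y} _.
Arguments unit {S V} r A.
Arguments counit {S V} r x.

Definition tmap (p : tspace * tspace) : Type := pt (fst p) -> pt (snd p).
Definition dmap (p : rawDL * rawDL) : Type := dcar (fst p) -> dcar (snd p).

Definition is_rpd {S} {V : algebra S -> Prop} (lt : lattice_terms S)
  (R : rpd_data V) : Prop :=
  is_category (Xcat R) /\ is_pfunctor (flat R) /\
  (forall A, Dhom R (idA A) = idm (Dobj R A)) /\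
  (forall (A B C : objA V) (f : homA A B) (g : homA B C),
      Dhom R (compA g f) = comp (Dhom R f) (Dhom R g)) /\
  (forall x, sval (Ehom R (idm x)) = sval (idA (Eobj R x))) /\
  (forall (x y z : Ob (Xcat R)) (f : Hom x y) (g : Hom y z),
      sval (Ehom R (comp g f)) = sval (compA (Ehom R f) (Ehom R g))) /\
  (forall (A B : objA V) (f : homA A B),
      sval (compA (unit R B) f) = sval (compA (Ehom R (Dhom R f)) (unit R A))) /\
  (forall (x y : Ob (Xcat R)) (f : Hom x y),
      comp (counit R y) f = comp (Dhom R (Ehom R f)) (counit R x)) /\
  (forall A, exists g : homA (Eobj R (Dobj R A)) A,
      sval (compA g (unit R A)) = sval (idA A) /\
      sval (compA (unit R A) g) = sval (idA _)) /\
  (forall x, exists g : Hom (Dobj R (Eobj R x)) x,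
      comp g (counit R x) = idm x /\ comp (counit R x) g = idm _) /\
  (* ^flat o D = H o ^flat *)
  (forall A, fobj (flat R) (Dobj R A) = rawH (reduct lt (sval A))) /\
  (forall (A B : objA V) (f : homA A B),
      existT tmap (fobj (flat R) (Dobj R B), fobj (flat R) (Dobj R A))
        (fhom (flat R) (Dhom R f)) =
      existT tmap (rawH (reduct lt (sval B)), rawH (reduct lt (sval A)))
        (Hmap (hom_reduct lt (svalP f)))) /\
  (* ^flat o E = K o ^flat *)
  (forall x, reduct lt (sval (Eobj R x)) = rawK (fobj (flat R) x)) /\
  (forall (x y : Ob (Xcat R)) (f : Hom x y),
      existT dmap (reduct lt (sval (Eobj R y)), reduct lt (sval (Eobj R x)))
        (sval (Ehom R f)) =
      existT dmap (rawK (fobj (flat R) y), rawK (fobj (flat R) x))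
        (Kmap (fhom_pm (flat R) f))) /\
  (* e_A^flat = e_{A^flat} *)
  (forall A : objA V,
      existT dmap (reduct lt (sval A), reduct lt (sval (Eobj R (Dobj R A))))
        (sval (unit R A)) =
      existT dmap (reduct lt (sval A), rawK (rawH (reduct lt (sval A))))
        (@evK (reduct lt (sval A)))) /\
  (* eps_X^flat = eps_{X^flat} *)
  (forall x : Ob (Xcat R),
      existT tmap (fobj (flat R) x, fobj (flat R) (Dobj R (Eobj R x)))
        (fhom (flat R) (counit R x)) =
      existT tmap (fobj (flat R) x, rawH (rawK (fobj (flat R) x)))
        (@evH (fobj (flat R) x))).

Definition surj {T U : Type} (f : T -> U) : Prop := forall y, exists x, f x = y.

Definition jointly_surj {T1 T2 U : Type} (f1 : T1 -> U) (f2 : T2 -> U) : Prop :=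
  forall y, (exists x, f1 x = y) \/ (exists x, f2 x = y).

(* Y = f1(X1) \dot\cup f2(X2) as ordered spaces *)
Definition disjoint_union (Y : tspace) {T1 T2 : Type}
  (f1 : T1 -> pt Y) (f2 : T2 -> pt Y) : Prop :=
  (forall a b, f1 a <> f2 b) /\
  jointly_surj f1 f2 /\
  (forall a b, ~ ple Y (f1 a) (f2 b) /\ ~ ple Y (f2 b) (f1 a)).

From Stdlib Require Import List FunctionalExtensionality ClassicalEpsilon ProofIrrelevance.
From Stdlib Require Import Eqdep Classical.
From mathcomp Require Import all_boot.

(* Both conditions are statements about a pair of homomorphisms [p1, p2] out of
   one algebra: under the duality, jointly surjective [phi1, phi2] correspond to
   jointly injective [E phi1, E phi2], surjective [phi_i] to injective [E phi_i],
   and a disjoint union to elements of [E Y] mapped to [(1, 0)] and to [(0, 1)].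

   (1) -> (2): if some pair is identified by [p1] but separated by [p2], the
   common discriminator shows that the image of [(p1, p2)] is a full product,
   so [(1, 0)] and [(0, 1)] are attained; otherwise joint injectivity makes
   both [p_i] injective.

   (2) -> (1): for triples in [A1] and [A2], apply (2) to the duals of the
   projections out of the subalgebra of [A1 * A2] generated by the triples.
   Disjointness yields terms with values [(1, 0)] and [(0, 1)]; surjectivity
   forces the two triples to have the same equality pattern. Either way one
   term computes the discriminator on both triples, and the majority term of
   the lattice reduct (Baker-Pixley) turns this pairwise interpolation into a
   single term on the finitely many triples of all the algebras. *)

Lemma sval_inj (T : Type) (P : T -> Prop) (u v : {x | P x}) : sval u = sval v -> u = v.
Proof. by apply: eq_sig_hprop => x; exact: proof_irrelevance. Qed.
Arguments sval_inj {T P u v}.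

Definition pbool (P : Prop) : bool := if excluded_middle_informative P then true else false.

Lemma pboolP (P : Prop) : reflect P (pbool P).
Proof. by rewrite /pbool; case: excluded_middle_informative => h; constructor. Qed.

Lemma existT_transport {I : Type} {F : I -> Type} (Q : forall i, F i -> Prop)
  {i j : I} {x : F i} {y : F j} :
  existT F i x = existT F j y -> Q i x -> Q j y.
Proof.
by move=> e q; exact: (@eq_rect _ (existT F i x) (fun s => Q (projT1 s) (projT2 s)) q _ e).
Qed.

(* The compatibilities of [D] and [E] with [^flat] are equalities of dependent
   pairs; these move a property of two maps with a common (co)domain across two
   such equalities at once. *)
Lemma dmap_span_transport
  (Q : forall L L1 L2 : rawDL, (dcar L -> dcar L1) -> (dcar L -> dcar L2) -> Prop)
  {L L1 L2 L' L1' L2' : rawDL} {f1 : dcar L -> dcar L1} {f2 : dcar L -> dcar L2}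
  {f1' : dcar L' -> dcar L1'} {f2' : dcar L' -> dcar L2'} :
  existT dmap (L, L1) f1 = existT dmap (L', L1') f1' ->
  existT dmap (L, L2) f2 = existT dmap (L', L2') f2' ->
  Q L L1 L2 f1 f2 -> Q L' L1' L2' f1' f2'.
Proof.
move=> e1 e2; case: (f_equal (@projT1 _ _) e1) => eL eL1.
case: (f_equal (@projT1 _ _) e2) => _ eL2; subst L' L1' L2'.
by rewrite -(inj_pairT2 _ _ _ _ _ e1) -(inj_pairT2 _ _ _ _ _ e2).
Qed.

Lemma tmap_cospan_transport
  (Q : forall X1 X2 Y : tspace, (pt X1 -> pt Y) -> (pt X2 -> pt Y) -> Prop)
  {X1 X2 Y X1' X2' Y' : tspace} {f1 : pt X1 -> pt Y} {f2 : pt X2 -> pt Y}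
  {f1' : pt X1' -> pt Y'} {f2' : pt X2' -> pt Y'} :
  existT tmap (X1, Y) f1 = existT tmap (X1', Y') f1' ->
  existT tmap (X2, Y) f2 = existT tmap (X2', Y') f2' ->
  Q X1 X2 Y f1 f2 -> Q X1' X2' Y' f1' f2'.
Proof.
move=> e1 e2; case: (f_equal (@projT1 _ _) e1) => eX1 eY.
case: (f_equal (@projT1 _ _) e2) => eX2 _; subst X1' X2' Y'.
by rewrite -(inj_pairT2 _ _ _ _ _ e1) -(inj_pairT2 _ _ _ _ _ e2).
Qed.

(** * Lattice reducts and terms *)

Section BoundedDistributiveLattice.
Variable L : rawDL.
Hypothesis hL : is_bdl L.
Local Notation "x ∧ y" := (dmeet L x y) (at level 40, left associativity).
Local Notation "x ∨ y" := (djoin L x y) (at level 50, left associativity).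

Lemma meetx1 x : x ∧ dtop L = x.
Proof. by case: hL => _ [_ [_ [_ [_ [_ [_ []]]]]]]. Qed.

Lemma joinx0 x : x ∨ dbot L = x.
Proof. by case: hL => _ [_ [_ [_ [_ [_ [_ [_]]]]]]]. Qed.

Lemma meetxx x : x ∧ x = x.
Proof. by case: hL => _ [_ [_ [_ [meetKU [joinKI _]]]]]; rewrite -{2}(joinKI x x) meetKU. Qed.

Lemma joinxx x : x ∨ x = x.
Proof. by case: hL => _ [_ [_ [_ [meetKU [joinKI _]]]]]; rewrite -{2}(meetKU x x) joinKI. Qed.

Lemma meetx0 x : x ∧ dbot L = dbot L.
Proof.
case: hL => _ [_ [meetC [joinC [meetKU _]]]].
by rewrite meetC -{1}(joinx0 x) joinC meetKU.
Qed.

Lemma join0x x : dbot L ∨ x = x.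
Proof. by case: hL => _ [_ [_ [joinC _]]]; rewrite joinC joinx0. Qed.

Definition dmaj x y z := (x ∧ y) ∨ (y ∧ z) ∨ (x ∧ z).

Lemma dmaj_xxy x y : dmaj x x y = x.
Proof. by case: hL => _ [_ [_ [_ [_ [joinKI _]]]]]; rewrite /dmaj meetxx !joinKI. Qed.

Lemma dmaj_xyx x y : dmaj x y x = x.
Proof.
case: hL => _ [_ [meetC [joinC [_ [joinKI _]]]]].
by rewrite /dmaj (meetC y x) joinxx meetxx joinC joinKI.
Qed.

Lemma dmaj_yxx x y : dmaj y x x = x.
Proof.
case: hL => _ [_ [meetC [joinC [_ [joinKI _]]]]].
by rewrite /dmaj meetxx (meetC y x) (joinC (x ∧ y)) !joinKI.
Qed.

End BoundedDistributiveLattice.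

Lemma eval_Var {S : signature} (A : algebra S) n (env : 'I_n -> car A) (i : 'I_n) :
  eval A env (Var i) = env i.
Proof. by []. Qed.

Fixpoint tsubst {S : signature} {n m : nat} (s : 'I_n -> term S m) (t : term S n) :
  term S m :=
  match t with
  | Var i => s i
  | App o args => App o (fun j => tsubst s (args j))
  end.

Lemma eval_tsubst {S : signature} (A : algebra S) n m (s : 'I_n -> term S m)
  (env : 'I_m -> car A) (t : term S n) :
  eval A env (tsubst s t) = eval A (fun i => eval A env (s i)) t.
Proof.
elim: t => [i|o args IH] //=; congr (opr A o _).
by apply: functional_extensionality => j; exact: IH.
Qed.

Lemma env2_map {T U : Type} (f : T -> U) (x y : T) :
  (fun i => f (env2 x y i)) = env2 (f x) (f y).
Proof. by apply: functional_extensionality => i; rewrite /env2; case: ifP. Qed.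

Lemma env3_map {T U : Type} (f : T -> U) (x y z : T) :
  (fun i => f (env3 x y z i)) = env3 (f x) (f y) (f z).
Proof. by apply: functional_extensionality => i; rewrite /env3; case: ifP => //; case: ifP. Qed.

Section LatticeTerms.
Variables (S : signature) (lt : lattice_terms S).

Definition meetT {m} (a b : term S m) : term S m := tsubst (env2 a b) (tmeet lt).
Definition joinT {m} (a b : term S m) : term S m := tsubst (env2 a b) (tjoin lt).
Definition majT {m} (a b c : term S m) : term S m :=
  joinT (joinT (meetT a b) (meetT b c)) (meetT a c).

Lemma eval_meetT (A : algebra S) m (env : 'I_m -> car A) (a b : term S m) :
  eval A env (meetT a b) = dmeet (reduct lt A) (eval A env a) (eval A env b).
Proof. by rewrite /meetT eval_tsubst env2_map. Qed.

Lemma eval_joinT (A : algebra S) m (env : 'I_m -> car A) (a b : term S m) :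
  eval A env (joinT a b) = djoin (reduct lt A) (eval A env a) (eval A env b).
Proof. by rewrite /joinT eval_tsubst env2_map. Qed.

Lemma eval_majT (A : algebra S) m (env : 'I_m -> car A) (a b c : term S m) :
  eval A env (majT a b c) =
  dmaj (reduct lt A) (eval A env a) (eval A env b) (eval A env c).
Proof. by rewrite /majT !eval_joinT !eval_meetT. Qed.

End LatticeTerms.
Arguments meetT {S} lt {m}.
Arguments joinT {S} lt {m}.
Arguments majT {S} lt {m}.

(** * Discriminators *)

Definition disc {T : Type} (x y z : T) : T := if pbool (x = y) then z else x.

Lemma is_discriminatorP {S} (A : algebra S) (t : term S 3) :
  is_discriminator A t <-> forall x y z, eval A (env3 x y z) t = disc x y z.
Proof.
split=> dA x y z; rewrite /disc.
- by case: pboolP => exy; [exact: (proj1 (dA x y z)) | exact: (proj2 (dA x y z))].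
- by have := dA x y z; rewrite /disc; case: pboolP.
Qed.

Lemma eval3_hom {S} (A B : algebra S) (u : car A -> car B) (t : term S 3) x y z :
  is_hom A B u -> u (eval A (env3 x y z) t) = eval B (env3 (u x) (u y) (u z)) t.
Proof. by move=> hu; rewrite (eval_hom hu) env3_map. Qed.

Lemma is_discriminator_bij {S} {A B : algebra S} {u : car A -> car B} {v : car B -> car A}
  {t : term S 3} :
  is_hom A B u -> cancel u v -> cancel v u -> is_discriminator A t -> is_discriminator B t.
Proof.
move=> hu vu uv dA x y z.
have -> : eval B (env3 x y z) t = u (eval A (env3 (v x) (v y) (v z)) t)
  by rewrite eval3_hom // !uv.
have [d1 d2] := dA (v x) (v y) (v z); split.
- by move=> exy; rewrite d1 ?uv // exy.
- by move=> nxy; rewrite d2 ?uv // => /(can_inj uv).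
Qed.

Section DiscriminatorPairs.
Variables (S : signature) (C C1 C2 : algebra S) (t : term S 3).
Variables (p1 : car C -> car C1) (p2 : car C -> car C2).
Hypotheses (hp1 : is_hom C C1 p1) (hp2 : is_hom C C2 p2).
Hypotheses (d1 : is_discriminator C1 t) (d2 : is_discriminator C2 t).

(* For [p1 a = p1 b], [p2 a <> p2 b] and [p2 a <> p2 v], the element
   [m := t(a, b, v)] has [p1 m = p1 v] and [p2 m = p2 a], so [t(v, m, u)] works. *)
Lemma disc_image_prod g g' :
  p1 g = p1 g' -> p2 g <> p2 g' -> forall u v, exists k, p1 k = p1 u /\ p2 k = p2 v.
Proof.
move=> e1 n2 u v.
pose T x y z := eval C (env3 x y z) t.
have witness a b :
    p1 a = p1 b -> p2 a <> p2 b -> p2 a <> p2 v -> exists k, p1 k = p1 u /\ p2 k = p2 v.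
  move=> eab nab nav; pose m := T a b v.
  have m1 : p1 m = p1 v by rewrite eval3_hom // eab (proj1 (d1 _ _ _)).
  have m2 : p2 m = p2 a by rewrite eval3_hom // (proj2 (d2 _ _ _)).
  exists (T v m u); split.
  - by rewrite eval3_hom // m1 (proj1 (d1 _ _ _)).
  - by rewrite eval3_hom // m2 (proj2 (d2 _ _ _)) // => /esym.
case: (classic (p2 g = p2 v)) => [E|E]; last exact: (witness g g').
by apply: (witness g' g) => // E'; apply: n2; rewrite ?E E'.
Qed.

End DiscriminatorPairs.
Arguments disc_image_prod {S C C1 C2 t p1 p2} hp1 hp2 d1 d2 {g g'}.

(* The algebraic dual of [surj_dichotomy]. *)
Definition split_or_injective (L L1 L2 : rawDL)
  (p1 : dcar L -> dcar L1) (p2 : dcar L -> dcar L2) : Prop :=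
  (forall a b, p1 a = p1 b -> p2 a = p2 b -> a = b) ->
  (exists a b, p1 a = dtop L1 /\ p2 a = dbot L2 /\ p1 b = dbot L1 /\ p2 b = dtop L2) \/
  (injective p1 /\ injective p2).

Definition surj_dichotomy (Y : tspace) {T1 T2 : Type} (f1 : T1 -> pt Y) (f2 : T2 -> pt Y) :
  Prop :=
  jointly_surj f1 f2 -> disjoint_union Y f1 f2 \/ (surj f1 /\ surj f2).

Lemma disc_split_or_injective {S} {lt : lattice_terms S} {C C1 C2 : algebra S}
  {t : term S 3} {p1 : car C -> car C1} {p2 : car C -> car C2} :
  is_hom C C1 p1 -> is_hom C C2 p2 -> is_discriminator C1 t -> is_discriminator C2 t ->
  split_or_injective (reduct lt C) (reduct lt C1) (reduct lt C2) p1 p2.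
Proof.
move=> hp1 hp2 d1 d2 jinj.
suff : (forall u v, exists k, p1 k = p1 u /\ p2 k = p2 v) \/
       (injective p1 /\ injective p2).
  case=> [full|]; last by right.
  left; have [_ [_ [p1bot p1top]]] := hom_reduct lt hp1.
  have [_ [_ [p2bot p2top]]] := hom_reduct lt hp2.
  have [a [a1 a2]] := full (dtop (reduct lt C)) (dbot (reduct lt C)).
  have [b [b1 b2]] := full (dbot (reduct lt C)) (dtop (reduct lt C)).
  by exists a, b; rewrite a1 a2 b1 b2.
have [[g [g' [e n]]]|no12] := classic (exists g g', p1 g = p1 g' /\ p2 g <> p2 g').
  by left; exact: (disc_image_prod hp1 hp2 d1 d2 e n).
have [[g [g' [e n]]]|no21] := classic (exists g g', p2 g = p2 g' /\ p1 g <> p1 g').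
  left=> u v; have [k [k2 k1]] := disc_image_prod hp2 hp1 d2 d1 e n v u.
  by exists k.
right; split=> g g' e; apply: jinj => //; apply: NNPP => ne.
- by apply: no12; exists g, g'.
- by apply: no21; exists g, g'.
Qed.

(** * Priestley spaces: the direction (1) -> (2) *)

Lemma pmorph_char {Y : tspace} {U : pt Y -> Prop} :
  clopen Y U -> upset Y U -> pmorph Y two (fun y => pbool (U y)).
Proof.
move=> [oU oC] uU; split.
- move=> W _; apply: popen_local => y; case: (pboolP (U y)) => Uy Wy.
  + by exists U; split=> //; split=> // z Uz; case: pboolP.
  + by exists (fun z => ~ U z); split=> //; split=> // z nUz; case: pboolP.
- by move=> x z le; apply/implyP => /pboolP Ux; apply/pboolP; exact: uU Ux le.
Qed.

Lemma Kcar_separates (Y : tspace) (a b : pt Y) :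
  is_priestley Y -> a <> b -> exists k : Kcar Y, sval k a != sval k b.
Proof.
move=> [[_ [anti _]] [_ sep]] nab.
have [le|nle] := classic (ple Y a b).
- have [|U [cU [uU [Ub nUa]]]] := sep b a; first by move=> le'; apply: nab; exact: anti.
  exists (exist _ _ (pmorph_char cU uU)) => /=.
  by rewrite (introF (pboolP _) nUa) (introT (pboolP _) Ub).
- have [U [cU [uU [Ua nUb]]]] := sep a b nle.
  exists (exist _ _ (pmorph_char cU uU)) => /=.
  by rewrite (introF (pboolP _) nUb) (introT (pboolP _) Ua).
Qed.

Lemma compact_point_cover (X : tspace) (O : pt X -> pt X -> Prop) :
  compact X -> (forall x, popen X (O x)) -> (forall x, O x x) ->
  exists l : list (pt X), forall z, exists x, In x l /\ O x z.
Proof.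
move=> cX oO Ox.
have [s [sO scov]] : exists s : list (pt X -> Prop),
    (forall W, In W s -> exists x, W = O x) /\ (forall z, exists W, In W s /\ W z).
  apply: cX => [W [x ->]|z]; first exact: oO.
  by exists (O z); split=> //; exists z.
have [l hl] : exists l, forall W, In W s -> exists x, In x l /\ W = O x.
  elim: s sO {scov} => [|W s IH] sO; first by exists nil.
  have [x ->] := sO W (or_introl erefl).
  have [l hl] := IH (fun W' h => sO W' (or_intror h)).
  exists (x :: l) => W' [<-|/hl [x' [x'l ->]]]; first by exists x; split=> //; left.
  by exists x'; split=> //; right.
exists l => z; have [W [Ws Wz]] := scov z; have [x [xl eW]] := hl W Ws.
by exists x; rewrite -eW.
Qed.

Section FiniteJoinsMeets.
Variables (T : Type) (Y : tspace) (g : T -> Kcar Y).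

Definition Kbigjoin (l : list T) : Kcar Y :=
  foldr (fun x k => djoin (rawK Y) (g x) k) (dbot (rawK Y)) l.
Definition Kbigmeet (l : list T) : Kcar Y :=
  foldr (fun x k => dmeet (rawK Y) (g x) k) (dtop (rawK Y)) l.

Lemma Kbigjoin_val l y : sval (Kbigjoin l) y = List.existsb (fun x => sval (g x) y) l.
Proof. by elim: l => //= x l <-. Qed.

Lemma Kbigmeet_val l y : sval (Kbigmeet l) y = List.forallb (fun x => sval (g x) y) l.
Proof. by elim: l => //= x l <-. Qed.

End FiniteJoinsMeets.
Arguments Kbigjoin {T Y} g l.
Arguments Kbigmeet {T Y} g l.

(* A point [y] outside the compact image gives clopen upsets [U], [V] with
   [y] in [V] but not in [U], whose traces on the image coincide: [U] collects
   the separators that vanish at [y], [V] those that do not. *)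
Lemma surj_of_Kmap_injective (X Y : tspace) (f : pt X -> pt Y) (hf : pmorph X Y f) :
  compact X -> is_priestley Y -> injective (Kmap hf) -> surj f.
Proof.
move=> cX pY inj y; apply: NNPP => ny.
have sep x : exists k : Kcar Y, sval k (f x) != sval k y.
  by apply: Kcar_separates => // e; apply: ny; exists x.
have [kf kfP] := choice _ sep.
have [l cover] := compact_point_cover X
  (fun x z => sval (kf x) (f z) = sval (kf x) (f x)) cX
  (fun x => (pmorph_comp hf (svalP (kf x))).1 (fun b => b = _) I) (fun x => erefl).
pose U := Kbigjoin kf (List.filter (fun x => ~~ sval (kf x) y) l).
pose V := Kbigmeet kf (List.filter (fun x => sval (kf x) y) l).
have Uy : sval U y = false.
  rewrite Kbigjoin_val; apply: negbTE; apply/negP.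
  by move=> /existsb_exists [x [/filter_In [_ nx] kx]]; rewrite kx in nx.
have Vy : sval V y by rewrite Kbigmeet_val; apply/forallb_forall => x /filter_In [].
have eVU : Kmap hf (djoin (rawK Y) V U) = Kmap hf U.
  apply: sval_inj; apply: functional_extensionality => z /=.
  have [x [xl ex]] := cover z; move: (kfP x); rewrite -ex.
  case ey: (sval (kf x) y) => ez.
  - suff -> : sval V (f z) = false by [].
    rewrite Kbigmeet_val; apply: negbTE; apply/negP => /forallb_forall /(_ x).
    by rewrite filter_In ey => /(_ (conj xl erefl)) kx; rewrite kx in ez.
  - suff -> : sval U (f z) by rewrite orbT.
    rewrite Kbigjoin_val; apply/existsb_exists; exists x; rewrite filter_In ey.
    by move: ez; case: (sval (kf x) (f z)).
by move: (f_equal (fun k => sval k y) (inj _ _ eVU)) => /=; rewrite Uy Vy.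
Qed.

Lemma disjoint_union_of_separators {X1 X2 Y : tspace} {f1 : pt X1 -> pt Y}
  {f2 : pt X2 -> pt Y} (k k' : Kcar Y) :
  jointly_surj f1 f2 ->
  (forall x, sval k (f1 x)) -> (forall x, ~~ sval k (f2 x)) ->
  (forall x, ~~ sval k' (f1 x)) -> (forall x, sval k' (f2 x)) ->
  disjoint_union Y f1 f2.
Proof.
move=> js k1 k2 k1' k2'; split; [|split=> //].
- by move=> a b e; move: (k2 b); rewrite -e k1.
- move=> a b; split=> le.
  + by move: (proj2 (svalP k) _ _ le) (k1 a) (k2 b) => /=; case: (sval k _); case: (sval k _).
  + by move: (proj2 (svalP k') _ _ le) (k1' a) (k2' b) => /=; case: (sval k' _); case: (sval k' _).
Qed.

Lemma dichotomy_of_split_or_injective {X1 X2 Y : tspace} {f1 : pt X1 -> pt Y}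
  {f2 : pt X2 -> pt Y} (hf1 : pmorph X1 Y f1) (hf2 : pmorph X2 Y f2) :
  compact X1 -> compact X2 -> is_priestley Y ->
  split_or_injective (rawK Y) (rawK X1) (rawK X2) (Kmap hf1) (Kmap hf2) ->
  surj_dichotomy Y f1 f2.
Proof.
move=> cX1 cX2 pY split js.
case: split => [k k' e1 e2|[k [k' [k1 [k2 [k1' k2']]]]]|[i1 i2]].
- apply: sval_inj; apply: functional_extensionality => y.
  by case: (js y) => [[x <-]|[x <-]]; [move: e1 | move: e2] => /(f_equal (fun q => sval q x)).
- left; apply: (disjoint_union_of_separators k k' js) => x;
    [move: k1 | move: k2 | move: k1' | move: k2'] => /(f_equal (fun q => sval q x)) /= -> //.
- by right; split; apply: surj_of_Kmap_injective.
Qed.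

Lemma disjoint_union_sym (Y : tspace) (T1 T2 : Type) (f1 : T1 -> pt Y) (f2 : T2 -> pt Y) :
  disjoint_union Y f1 f2 -> disjoint_union Y f2 f1.
Proof.
move=> [dis [js inc]]; split; [|split].
- by move=> a b e; apply: (dis b a).
- by move=> y; case: (js y); [right|left].
- by move=> a b; have [] := inc b a.
Qed.
Arguments disjoint_union_sym {Y T1 T2 f1 f2}.

(** * Duals of finite lattices: the direction (2) -> (1) *)

Lemma Hle_refl {L : rawDL} (x : Hcar L) : ple (rawH L) x x.
Proof. by move=> a /=; case: (sval x a). Qed.

Lemma Hle_trans {L : rawDL} {x y z : Hcar L} :
  ple (rawH L) x y -> ple (rawH L) y z -> ple (rawH L) x z.
Proof.
move=> lxy lyz a /=; move: (lxy a) (lyz a) => /=.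
by case: (sval x a); case: (sval y a); case: (sval z a).
Qed.

Lemma Hle_anti {L : rawDL} {x y : Hcar L} :
  ple (rawH L) x y -> ple (rawH L) y x -> x = y.
Proof.
move=> lxy lyx; apply: sval_inj; apply: functional_extensionality => a.
by move: (lxy a) (lyx a) => /=; case: (sval x a); case: (sval y a).
Qed.

Lemma Hopen_of_finite (L : rawDL) :
  (exists s : list (dcar L), forall a, In a s) -> forall U, popen (rawH L) U.
Proof.
move=> [s hs] U x Ux; exists (List.map (fun a => (a, sval x a)) s); split.
- by apply/Forall_forall => p /in_map_iff [a [<- _]].
- move=> y /Forall_forall hy; suff -> : y = x by [].
  apply: sval_inj; apply: functional_extensionality => a.
  exact: (hy (a, sval x a) (in_map (fun a => (a, sval x a)) _ _ (hs a))).
Qed.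

Lemma pmorph_Hfinite (L : rawDL) (U : Hcar L -> bool) :
  (exists s : list (dcar L), forall a, In a s) ->
  (forall x y, ple (rawH L) x y -> U x -> U y) -> pmorph (rawH L) two U.
Proof.
move=> fin mon; split=> [W _|x y le]; first exact: Hopen_of_finite.
by apply/implyP; exact: mon.
Qed.

Lemma eq_of_Hpoints (L : rawDL) (a b : dcar L) :
  injective (evK L) -> (forall x : Hcar L, sval x a = sval x b) -> a = b.
Proof. by move=> inj e; apply: inj; apply: sval_inj; exact: functional_extensionality. Qed.

Lemma Hpoint_of_pmorph (L : rawDL) (U : Hcar L -> bool) :
  surj (evK L) -> pmorph (rawH L) two U -> exists a, forall x : Hcar L, sval x a = U x.
Proof.
move=> sur pU; have [a ea] := sur (exist _ U pU).
by exists a => x; exact: (f_equal (fun k => sval k x) ea).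
Qed.

Section FiniteLatticeDual.
Variables (L L1 L2 : rawDL) (p1 : dcar L -> dcar L1) (p2 : dcar L -> dcar L2).
Hypotheses (hp1 : is_dlhom L L1 p1) (hp2 : is_dlhom L L2 p2).
Hypothesis finL : exists s : list (dcar L), forall a, In a s.
Hypotheses (injL : injective (evK L)) (surjL : surj (evK L)).
Hypotheses (inj1 : injective (evK L1)) (inj2 : injective (evK L2)).

Lemma injective_of_Hmap_surj : surj (Hmap hp1) -> injective p1.
Proof.
move=> s a b e; apply: eq_of_Hpoints => // x.
by have [x' <-] := s x; rewrite /= e.
Qed.

(* If [h] is in neither image, the upset of [h] and the same upset without [h]
   are clopen upsets that agree on both images. *)
Lemma Hmap_jointly_surj :
  (forall a b, p1 a = p1 b -> p2 a = p2 b -> a = b) -> jointly_surj (Hmap hp1) (Hmap hp2).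
Proof.
move=> jinj h; apply: NNPP => nh.
pose U z := pbool (ple (rawH L) h z).
pose W z := pbool (ple (rawH L) h z /\ z <> h).
have [u eu] : exists u, forall x, sval x u = U x.
  apply: Hpoint_of_pmorph => //; apply: pmorph_Hfinite => // x y le /pboolP hx.
  by apply/pboolP; exact: Hle_trans hx le.
have [w ew] : exists w, forall x, sval x w = W x.
  apply: Hpoint_of_pmorph => //; apply: pmorph_Hfinite => // x y le /pboolP [hx nx].
  apply/pboolP; split; first exact: Hle_trans hx le.
  by move=> eyh; apply: nx; apply: Hle_anti => //; rewrite -eyh.
have UW z : z <> h -> U z = W z by move=> nz; apply/pboolP/pboolP => [|[]//]; split.
have uw : u = w.
  apply: jinj; apply: eq_of_Hpoints => // x.
  - move: (eu (Hmap hp1 x)) (ew (Hmap hp1 x)) => /= -> ->.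
    by apply: UW => e; apply: nh; left; exists x.
  - move: (eu (Hmap hp2 x)) (ew (Hmap hp2 x)) => /= -> ->.
    by apply: UW => e; apply: nh; right; exists x.
move: (ew h); rewrite -uw eu /U /W (introT (pboolP _) (Hle_refl h)).
by case: pboolP => // -[].
Qed.

Lemma Hmap_disjoint_split :
  disjoint_union (rawH L) (Hmap hp1) (Hmap hp2) -> exists e, p1 e = dtop L1 /\ p2 e = dbot L2.
Proof.
move=> [dis [js inc]].
have [e ee] : exists e, forall x, sval x e = pbool (exists x1, Hmap hp1 x1 = x).
  apply: Hpoint_of_pmorph => //; apply: pmorph_Hfinite => // z z' le /pboolP [x ex].
  apply/pboolP; case: (js z') => // [[x' ex']].
  by case: (proj1 (inc x x')); rewrite ex ex'.
exists e; split; apply: eq_of_Hpoints => // x.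
- have [_ [_ [_ ->]]] := svalP x; move: (ee (Hmap hp1 x)) => /= ->.
  by apply/pboolP; exists x.
- have [_ [_ [-> _]]] := svalP x; move: (ee (Hmap hp2 x)) => /= ->.
  by case: pboolP => // -[x' ex']; case: (dis x' x).
Qed.

End FiniteLatticeDual.
Arguments injective_of_Hmap_surj {L L1 p1} hp1 injL.
Arguments Hmap_jointly_surj {L L1 L2 p1 p2} hp1 hp2 finL surjL inj1 inj2.
Arguments Hmap_disjoint_split {L L1 L2 p1 p2} hp1 hp2 finL surjL inj1 inj2.

Lemma split_or_injective_of_dichotomy {L L1 L2 : rawDL} {p1 : dcar L -> dcar L1}
  {p2 : dcar L -> dcar L2} (hp1 : is_dlhom L L1 p1) (hp2 : is_dlhom L L2 p2) :
  (exists s : list (dcar L), forall a, In a s) -> injective (evK L) -> surj (evK L) ->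
  injective (evK L1) -> injective (evK L2) ->
  surj_dichotomy (rawH L) (Hmap hp1) (Hmap hp2) -> split_or_injective L L1 L2 p1 p2.
Proof.
move=> finL injL surjL inj1 inj2 dich jinj.
case: (dich (Hmap_jointly_surj hp1 hp2 finL surjL inj1 inj2 jinj)) => [du|[s1 s2]].
- left; have [a [a1 a2]] := Hmap_disjoint_split hp1 hp2 finL surjL inj1 inj2 du.
  have [b [b2 b1]] := Hmap_disjoint_split hp2 hp1 finL surjL inj2 inj1 (disjoint_union_sym du).
  by exists a, b.
- by right; split; apply: injective_of_Hmap_surj.
Qed.

(** * Subproducts and majority interpolation *)

Section Subproduct.
Variables (S : signature) (A1 A2 : algebra S) (e1 : 'I_3 -> car A1) (e2 : 'I_3 -> car A2).

Definition gen_pair (p : car A1 * car A2) : Prop :=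
  exists t : term S 3, p.1 = eval A1 e1 t /\ p.2 = eval A2 e2 t.

Definition subprod : Type := {p | gen_pair p}.

Lemma gen_pair_opr o (args : 'I_(arity S o) -> subprod) :
  gen_pair (opr A1 o (fun j => (sval (args j)).1), opr A2 o (fun j => (sval (args j)).2)).
Proof.
have [ts hts] := choice (fun j t => (sval (args j)).1 = eval A1 e1 t /\
                                    (sval (args j)).2 = eval A2 e2 t) (fun j => svalP (args j)).
exists (App o ts); split=> /=; congr (opr _ o _); apply: functional_extensionality => j.
- by case: (hts j).
- by case: (hts j).
Qed.

Definition subprod_alg : algebra S :=
  @Algebra S subprod (fun o args => exist _ _ (gen_pair_opr o args)).

Definition subprod_var (k : 'I_3) : car subprod_alg :=
  exist _ (e1 k, e2 k) (ex_intro _ (Var k) (conj erefl erefl)).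

Lemma subprod_eval n (env : 'I_n -> car subprod_alg) (t : term S n) :
  sval (eval subprod_alg env t) =
  (eval A1 (fun i => (sval (env i)).1) t, eval A2 (fun i => (sval (env i)).2) t).
Proof.
elim: t => [i|o args IH] /=; first by case: (sval (env i)).
by congr pair; congr (opr _ o _); apply: functional_extensionality => j; rewrite IH.
Qed.

Lemma subprod_in_variety (V : algebra S -> Prop) : is_variety V -> V A1 -> V A2 -> V subprod_alg.
Proof.
move=> [Id hId] h1 h2; apply/hId => n l r hlr env; apply: sval_inj.
by rewrite !subprod_eval (proj1 (hId A1) h1 n l r hlr) (proj1 (hId A2) h2 n l r hlr).
Qed.

Lemma subprod_finite : finite_alg A1 -> finite_alg A2 -> finite_alg subprod_alg.
Proof.
move=> [l1 h1] [l2 h2].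
exists (flat_map (fun p => if excluded_middle_informative (gen_pair p) is left gp
                           then [:: exist _ p gp] else [::]) (list_prod l1 l2)).
move=> c; apply/in_flat_map; exists (sval c); split.
- by rewrite [sval c]surjective_pairing; apply: in_prod.
- case: excluded_middle_informative => [gp|]; last by move=> /(_ (svalP c)).
  by left; apply: sval_inj.
Qed.

Lemma subprod_fst_hom : is_hom subprod_alg A1 (fun c => (sval c).1).
Proof. by []. Qed.

Lemma subprod_snd_hom : is_hom subprod_alg A2 (fun c => (sval c).2).
Proof. by []. Qed.

Lemma subprod_proj_jointly_injective (a b : car subprod_alg) :
  (sval a).1 = (sval b).1 -> (sval a).2 = (sval b).2 -> a = b.
Proof.
move=> e1' e2'; apply: sval_inj.
by rewrite [sval a]surjective_pairing [sval b]surjective_pairing e1' e2'.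
Qed.

End Subproduct.
Arguments subprod_alg {S A1 A2} e1 e2.
Arguments subprod_var {S A1 A2 e1 e2} k.
Arguments subprod_in_variety {S A1 A2 e1 e2 V}.
Arguments subprod_finite {S A1 A2 e1 e2}.
Arguments subprod_fst_hom {S A1 A2} e1 e2.
Arguments subprod_snd_hom {S A1 A2} e1 e2.
Arguments subprod_proj_jointly_injective {S A1 A2 e1 e2}.

Section MajorityInterpolation.
Variables (S : signature) (lt : lattice_terms S) (P : Type) (alg : P -> algebra S).
Variables (env : forall p, 'I_3 -> car (alg p)) (target : forall p, car (alg p)).
Hypothesis bdl : forall p, is_bdl (reduct lt (alg p)).

Definition interpolates (t : term S 3) (p : P) : Prop := eval (alg p) (env p) t = target p.

Lemma interpolates_majT t1 t2 t3 p :
  interpolates t1 p /\ interpolates t2 p \/ interpolates t1 p /\ interpolates t3 p \/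
  interpolates t2 p /\ interpolates t3 p -> interpolates (majT lt t1 t2 t3) p.
Proof.
rewrite /interpolates eval_majT.
case=> [[-> ->]|[[-> ->]|[-> ->]]].
- exact: (dmaj_xxy _ (bdl p)).
- exact: (dmaj_xyx _ (bdl p)).
- exact: (dmaj_yxx _ (bdl p)).
Qed.

Variable ok : P -> Prop.
Hypothesis pairwise : forall p q, ok p -> ok q -> exists t, interpolates t p /\ interpolates t q.

(* Baker--Pixley: each of the three terms misses one of [q1], [q2], [p], so
   at every point at least two of them interpolate, and so does their majority. *)
Lemma majority_interpolation_ext {l : list P} {q1 q2 : P} :
  ok q1 -> ok q2 -> (forall p, In p l -> ok p) ->
  exists t, interpolates t q1 /\ interpolates t q2 /\ forall p, In p l -> interpolates t p.
Proof.
elim: l q1 q2 => [|p l IH] q1 q2 ok1 ok2 okl.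
  by have [t [t1 t2]] := pairwise _ _ ok1 ok2; exists t.
have okp := okl p (or_introl erefl).
have okl' p' (h : In p' l) := okl p' (or_intror h).
have [t1 [t1q2 [t1p t1l]]] := IH q2 p ok2 okp okl'.
have [t2 [t2q1 [t2p t2l]]] := IH q1 p ok1 okp okl'.
have [t3 [t3q1 [t3q2 t3l]]] := IH q1 q2 ok1 ok2 okl'.
exists (majT lt t1 t2 t3); split; [|split].
- by apply: interpolates_majT; right; right.
- by apply: interpolates_majT; right; left.
- move=> p' [<-|h]; apply: interpolates_majT; first by left.
  by left; split; [exact: t1l | exact: t2l].
Qed.

Lemma majority_interpolation (l : list P) :
  (forall p, In p l -> ok p) -> exists t, forall p, In p l -> interpolates t p.
Proof.
case: l => [|p l] okl; first by exists (Var ord0).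
have okp := okl p (or_introl erefl).
by have [t [_ [_ ht]]] := majority_interpolation_ext okp okp okl; exists t.
Qed.

End MajorityInterpolation.
Arguments majority_interpolation {S} lt {P alg} env target.

Lemma finite_sigma {I : Type} (T : I -> Type) (B : list I) :
  (forall i, In i B -> exists s : list (T i), forall x, In x s) ->
  exists l : list {i & T i},
    (forall p, In p l -> In (projT1 p) B) /\ forall i, In i B -> forall x, In (existT _ i x) l.
Proof.
elim: B => [|i B IH] fin; first by exists nil.
have [s hs] := fin i (or_introl erefl).
have [l [l1 l2]] := IH (fun i' h => fin i' (or_intror h)).
exists (List.map (existT _ i) s ++ l); split.
- by move=> p /in_app_iff [/in_map_iff [x [<- _]]|h]; [left | right; exact: l1].
- move=> i' [<-|h] x; apply/in_app_iff; [left | right; exact: l2].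
  exact: in_map.
Qed.

Lemma finite_triples {S} {A : algebra S} :
  finite_alg A -> exists s : list (car A * car A * car A), forall x, In x s.
Proof.
move=> [s hs]; exists (list_prod (list_prod s s) s) => [[[x y] z]].
by apply: in_prod; [apply: in_prod|].
Qed.

Definition disc_var {T : Type} (x y : T) : 'I_3 := if pbool (x = y) then ord_max else ord0.

Lemma env3_disc_var {T : Type} (x y z : T) : env3 x y z (disc_var x y) = disc x y z.
Proof. by rewrite /disc_var /disc; case: pboolP. Qed.

(** * Restricted Priestley dualities *)

Section RestrictedDuality.
Variables (S : signature) (V : algebra S -> Prop) (lt : lattice_terms S) (R : rpd_data V).
Hypothesis hR : is_rpd lt R.

Lemma rpd_priestley (x : Ob (Xcat R)) : is_priestley (fobj (flat R) x).
Proof. by case: hR => _ [[pP _] _]. Qed.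

Lemma rpd_flat_Dhom {A B : objA V} (f : homA A B) :
  existT tmap (fobj (flat R) (Dobj R B), fobj (flat R) (Dobj R A)) (fhom (flat R) (Dhom R f)) =
  existT tmap (rawH (reduct lt (sval B)), rawH (reduct lt (sval A)))
    (Hmap (hom_reduct lt (svalP f))).
Proof. by case: hR => _ [_ [_ [_ [_ [_ [_ [_ [_ [_ [_ [flatD _]]]]]]]]]]]. Qed.

Lemma rpd_flat_Ehom {x y : Ob (Xcat R)} (f : Hom x y) :
  existT dmap (reduct lt (sval (Eobj R y)), reduct lt (sval (Eobj R x))) (sval (Ehom R f)) =
  existT dmap (rawK (fobj (flat R) y), rawK (fobj (flat R) x)) (Kmap (fhom_pm (flat R) f)).
Proof. by case: hR => _ [_ [_ [_ [_ [_ [_ [_ [_ [_ [_ [_ [_ [flatE _]]]]]]]]]]]]]. Qed.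

Lemma rpd_unit_bij (A : objA V) :
  exists v, cancel (sval (unit R A)) v /\ cancel v (sval (unit R A)).
Proof.
case: hR => _ [_ [_ [_ [_ [_ [_ [_ [unit_iso _]]]]]]]].
have [g [gu ug]] := unit_iso A; exists (sval g); split=> x.
- exact: (f_equal (fun F => F x) gu).
- exact: (f_equal (fun F => F x) ug).
Qed.

Lemma rpd_evK_bij (A : objA V) :
  injective (evK (reduct lt (sval A))) /\ surj (evK (reduct lt (sval A))).
Proof.
have [v [uv vu]] := rpd_unit_bij A.
case: hR => _ [_ [_ [_ [_ [_ [_ [_ [_ [_ [_ [_ [_ [_ [flat_unit _]]]]]]]]]]]]]].
apply: (existT_transport (fun p (f : dmap p) => injective f /\ surj f) (flat_unit A)).
by split=> [|k]; [exact: can_inj uv | exists (v k)].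
Qed.

Lemma rpd_unit_discriminator {A : objA V} {t : term S 3} :
  is_discriminator (sval A) t -> is_discriminator (sval (Eobj R (Dobj R A))) t.
Proof.
by have [v [uv vu]] := rpd_unit_bij A; exact: is_discriminator_bij (svalP (unit R A)) uv vu.
Qed.

Lemma dichotomy_of_discriminator (A1 A2 : objA V) (t : term S 3) :
  is_discriminator (sval A1) t -> is_discriminator (sval A2) t ->
  forall (Y : Ob (Xcat R)) (phi1 : Hom (Dobj R A1) Y) (phi2 : Hom (Dobj R A2) Y),
  surj_dichotomy (fobj (flat R) Y) (fhom (flat R) phi1) (fhom (flat R) phi2).
Proof.
move=> d1 d2 Y phi1 phi2.
apply: (dichotomy_of_split_or_injective (fhom_pm _ phi1) (fhom_pm _ phi2));
  [exact: (rpd_priestley _).2.1 | exact: (rpd_priestley _).2.1 | exact: rpd_priestley |].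
apply: (dmap_span_transport split_or_injective (rpd_flat_Ehom phi1) (rpd_flat_Ehom phi2)).
exact: disc_split_or_injective (svalP (Ehom R phi1)) (svalP (Ehom R phi2))
  (rpd_unit_discriminator d1) (rpd_unit_discriminator d2).
Qed.

Hypothesis hV : is_variety V.
Hypothesis hbdl : forall A : algebra S, V A -> is_bdl (reduct lt A).

Lemma disc_pair_interpolation (A1 A2 : objA V) :
  finite_alg (sval A1) -> finite_alg (sval A2) ->
  (forall (Y : Ob (Xcat R)) (phi1 : Hom (Dobj R A1) Y) (phi2 : Hom (Dobj R A2) Y),
   surj_dichotomy (fobj (flat R) Y) (fhom (flat R) phi1) (fhom (flat R) phi2)) ->
  forall x1 y1 z1 x2 y2 z2, exists t,
    eval (sval A1) (env3 x1 y1 z1) t = disc x1 y1 z1 /\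
    eval (sval A2) (env3 x2 y2 z2) t = disc x2 y2 z2.
Proof.
move=> fin1 fin2 dich x1 y1 z1 x2 y2 z2.
pose e1 := env3 x1 y1 z1; pose e2 := env3 x2 y2 z2.
pose G : objA V := exist _ (subprod_alg e1 e2) (subprod_in_variety hV (svalP A1) (svalP A2)).
pose pi1 : homA G A1 := exist _ _ (subprod_fst_hom e1 e2).
pose pi2 : homA G A2 := exist _ _ (subprod_snd_hom e1 e2).
have [injG surjG] := rpd_evK_bij G.
have : split_or_injective (reduct lt (sval G)) (reduct lt (sval A1)) (reduct lt (sval A2))
         (sval pi1) (sval pi2).
  apply: (split_or_injective_of_dichotomy (hom_reduct lt (svalP pi1)) (hom_reduct lt (svalP pi2)))
    (subprod_finite fin1 fin2) injG surjG (rpd_evK_bij A1).1 (rpd_evK_bij A2).1 _.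
  apply: (tmap_cospan_transport (fun X1 X2 Y f1 f2 => surj_dichotomy Y f1 f2)
            (rpd_flat_Dhom pi1) (rpd_flat_Dhom pi2)).
  exact: dich.
case=> [|[a [b [a1 [a2 [b1 b2]]]]]|[inj1 inj2]]; first exact: subprod_proj_jointly_injective.
- have [ta [ta1 ta2]] := svalP a; have [tb [tb1 tb2]] := svalP b.
  exists (joinT lt (meetT lt (Var (disc_var x1 y1)) ta) (meetT lt (Var (disc_var x2 y2)) tb)).
  move: a1 a2 b1 b2 => /= a1 a2 b1 b2.
  rewrite !eval_joinT !eval_meetT !eval_Var -ta1 -ta2 -tb1 -tb2 a1 a2 b1 b2 !env3_disc_var.
  have bdl1 := hbdl _ (svalP A1); have bdl2 := hbdl _ (svalP A2).
  by rewrite !meetx1 // !meetx0 // joinx0 // join0x.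
- have g01 : (x1 = y1) <-> (x2 = y2).
    pose g k := @subprod_var _ _ _ e1 e2 k.
    split=> e.
    + by have := inj1 (g ord0) (g (@Ordinal 3 1 isT)) e => /(f_equal (fun c => (sval c).2)).
    + by have := inj2 (g ord0) (g (@Ordinal 3 1 isT)) e => /(f_equal (fun c => (sval c).1)).
  exists (Var (disc_var x1 y1)); split; first exact: env3_disc_var.
  rewrite eval_Var -env3_disc_var /disc_var.
  by have -> : pbool (x1 = y1) = pbool (x2 = y2) by apply/pboolP/pboolP => /g01.
Qed.

Lemma common_discriminator_of_dichotomy (B : list (objA V)) :
  (forall A : objA V, In A B -> finite_alg (sval A)) ->
  (forall A1 A2 : objA V, In A1 B -> In A2 B ->
   forall (Y : Ob (Xcat R)) (phi1 : Hom (Dobj R A1) Y) (phi2 : Hom (Dobj R A2) Y),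
   surj_dichotomy (fobj (flat R) Y) (fhom (flat R) phi1) (fhom (flat R) phi2)) ->
  exists t, forall A : objA V, In A B -> is_discriminator (sval A) t.
Proof.
move=> finB dich.
pose T (A : objA V) := (car (sval A) * car (sval A) * car (sval A))%type.
pose alg (p : {A & T A}) := sval (projT1 p).
pose env (p : {A & T A}) := env3 (projT2 p).1.1 (projT2 p).1.2 (projT2 p).2.
pose target (p : {A & T A}) := disc (projT2 p).1.1 (projT2 p).1.2 (projT2 p).2.
have [l [lB Bl]] := finite_sigma T B (fun A iA => finite_triples (finB A iA)).
have [|t ht] := majority_interpolation lt env target (fun p => hbdl _ (svalP (projT1 p)))
                  (fun p => In (projT1 p) B) _ l lB.
  move=> [A1 [[x1 y1] z1]] [A2 [[x2 y2] z2]] iA1 iA2.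
  exact: disc_pair_interpolation (finB A1 iA1) (finB A2 iA2) (dich A1 A2 iA1 iA2) x1 y1 z1 x2 y2 z2.
by exists t => A iA; apply/is_discriminatorP => x y z; exact: ht (Bl A iA (x, y, z)).
Qed.

End RestrictedDuality.
Arguments dichotomy_of_discriminator {S V lt R} hR {A1 A2 t}.
Arguments common_discriminator_of_dichotomy {S V lt R} hR hV hbdl {B}.

Theorem theorem3p4 (S : signature) (V : algebra S -> Prop)
  (lt : lattice_terms S) (R : rpd_data V) (B : list (objA V)) :
  is_variety V ->
  (forall A : algebra S, V A -> is_bdl (reduct lt A)) ->
  is_rpd lt R ->
  (forall A : objA V, In A B -> finite_alg (sval A)) ->
  ((forall A : objA V, In A B -> quasi_primal (sval A)) /\
   exists t : term S 3, forall A : objA V, In A B -> is_discriminator (sval A) t)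
  <->
  (forall A1 A2 : objA V, In A1 B -> In A2 B ->
   forall (Y : Ob (Xcat R))
          (phi1 : Hom (Dobj R A1) Y) (phi2 : Hom (Dobj R A2) Y),
     jointly_surj (fhom (flat R) phi1) (fhom (flat R) phi2) ->
     disjoint_union (fobj (flat R) Y) (fhom (flat R) phi1) (fhom (flat R) phi2)
     \/ (surj (fhom (flat R) phi1) /\ surj (fhom (flat R) phi2))).
Proof.
move=> hV hbdl hR finB; split.
- move=> [_ [t ht]] A1 A2 iA1 iA2.
  exact (dichotomy_of_discriminator hR (ht A1 iA1) (ht A2 iA2)).
- move=> dich; have [t ht] := common_discriminator_of_dichotomy hR hV hbdl finB dich.
  split; last by exists t.
  by move=> A iA; split; [exact: finB | exists t; exact: ht].
Qed.
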